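(* Let $\mathcal{F}_2$ be the ($5$-dimensional) space of framed $2$-gons and let $\mathcal D$ be the distribution on $\mathcal{F}_2$ consisting of those infinitesimal motions for which the velocity of $B_1$ is parallel to $u_1$ and the velocity of $B_2$ is parallel to $u_2$. Then $\mathcal D$ is bracket generating of type $(3,5)$: it has rank $3$, and at every point of $\mathcal{F}_2$ the values of vector fields tangent to $\mathcal D$ together with their first commutators span the tangent space of $\mathcal F_2$.
   Context: For nonzero vectors $u,v$ in the plane, $\angle(u,v)\in\mathbb{R}/2\pi\mathbb{Z}$ is the angle through which $u$ must be rotated counterclockwise to align with $v$. A framed $2$-gon is a segment $B_1B_2$ with $B_1\neq B_2$ together with unit vectors $u_1$ at $B_1$ and $u_2$ at $B_2$ such that $\angle(u_1,B_2-B_1)=\angle(B_2-B_1,u_2)$; the framings $(u_1,u_2)$ and $(-u_1,-u_2)$ are identified. $\mathcal{F}_2$ is the space of framed $2$-gons; it has coordinates $(x,y,\varphi,r,\alpha)$, where $(x,y)$ is the midpoint of $B_1B_2$, $\varphi$ its direction, $r>0$ its half-length, and $\alpha$ the angle the framing vectors make with the segment. *)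

From HB Require Import structures.
From mathcomp Require Import all_boot all_order all_algebra.
From mathcomp Require Import all_classical all_reals all_analysis.
Set Implicit Arguments. Unset Strict Implicit. Unset Printing Implicit Defensive.
Import Order.TTheory GRing.Theory Num.Theory.
Import numFieldNormedType.Exports.
Local Open Scope classical_set_scope.
Local Open Scope ring_scope.

(* Points of (the universal cover of) F_2 are rows p = (x, y, phi, r, alpha)
   of 'rV[R]_5 with r > 0; F_2 itself is the quotient by
   phi ~ phi + 2 pi and alpha ~ alpha + pi. *)

Definition i_x : 'I_5 := @Ordinal 5 0 isT.
Definition i_y : 'I_5 := @Ordinal 5 1 isT.
Definition i_phi : 'I_5 := @Ordinal 5 2 isT.
Definition i_r : 'I_5 := @Ordinal 5 3 isT.
Definition i_alpha : 'I_5 := @Ordinal 5 4 isT.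

Definition i0 : 'I_2 := @Ordinal 2 0 isT.
Definition i1 : 'I_2 := @Ordinal 2 1 isT.

Section F2.
Variable R : realType.

Definition coord (i : 'I_5) (p : 'rV[R]_5) : R := p ord0 i.

Definition vec2 (a b : R) : 'rV[R]_2 := \row_(j < 2) (if val j == 0%N then a else b).

Definition cross2 (a b : 'rV[R]_2) : R := a ord0 i0 * b ord0 i1 - a ord0 i1 * b ord0 i0.
Definition parallel (a b : 'rV[R]_2) : Prop := cross2 a b = 0.

Definition F2dom : set 'rV[R]_5 := [set p | 0 < coord i_r p].

Definition B1 (p : 'rV[R]_5) : 'rV[R]_2 :=
  vec2 (coord i_x p - coord i_r p * cos (coord i_phi p))
       (coord i_y p - coord i_r p * sin (coord i_phi p)).
Definition B2 (p : 'rV[R]_5) : 'rV[R]_2 :=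
  vec2 (coord i_x p + coord i_r p * cos (coord i_phi p))
       (coord i_y p + coord i_r p * sin (coord i_phi p)).

(* the framing: angle(u1, B2 - B1) = alpha = angle(B2 - B1, u2) *)
Definition u1 (p : 'rV[R]_5) : 'rV[R]_2 :=
  vec2 (cos (coord i_phi p - coord i_alpha p)) (sin (coord i_phi p - coord i_alpha p)).
Definition u2 (p : 'rV[R]_5) : 'rV[R]_2 :=
  vec2 (cos (coord i_phi p + coord i_alpha p)) (sin (coord i_phi p + coord i_alpha p)).

Definition Dist (p v : 'rV[R]_5) : Prop :=
  parallel ('D_v B1 p) (u1 p) /\ parallel ('D_v B2 p) (u2 p).

Fixpoint iterD (vs : seq 'rV[R]_5) (f : 'rV[R]_5 -> 'rV[R]_5) : 'rV[R]_5 -> 'rV[R]_5 :=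
  if vs is v :: vs' then (fun q => 'D_v (iterD vs' f) q) else f.

Definition smooth_on (U : set 'rV[R]_5) (f : 'rV[R]_5 -> 'rV[R]_5) : Prop :=
  forall (vs : seq 'rV[R]_5) (p : 'rV[R]_5), U p -> differentiable (iterD vs f) p.

Definition unitvec (i : 'I_5) : 'rV[R]_5 := \row_(j < 5) (j == i)%:R.

Definition descends (X : 'rV[R]_5 -> 'rV[R]_5) : Prop :=
  forall p, X (p + (2 * pi) *: unitvec i_phi) = X p /\ X (p + pi *: unitvec i_alpha) = X p.

Definition tangent_to_D (X : 'rV[R]_5 -> 'rV[R]_5) : Prop :=
  [/\ smooth_on F2dom X, descends X & forall p, F2dom p -> Dist p (X p)].

Definition lie (X Y : 'rV[R]_5 -> 'rV[R]_5) (p : 'rV[R]_5) : 'rV[R]_5 :=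
  'D_(X p) Y p - 'D_(Y p) X p.

End F2.

From Pilot Require Import Defs.
From HB Require Import structures.
From mathcomp Require Import all_boot all_order all_algebra.
From mathcomp Require Import all_classical all_reals all_analysis.
From mathcomp Require Import ring lra.
Set Implicit Arguments. Unset Strict Implicit. Unset Printing Implicit Defensive.
Import Order.TTheory GRing.Theory Num.Theory.
Import numFieldNormedType.Exports.
Local Open Scope classical_set_scope.
Local Open Scope ring_scope.

(* In the coordinates (x, y, phi, r, alpha) the distribution is spanned by d/dalpha and by two
   motions Z = [zvec], T = [tvec] that move B_1, B_2 with velocities (-u_1, u_2) and
   (r u_1, r u_2).  For r > 0 a motion is determined by the velocities of B_1, B_2 and by alpha',
   hence D has rank 3.  Z and T change sign under alpha -> alpha + pi, but cos alpha Z,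
   sin alpha Z, cos alpha T, sin alpha T and d/dalpha descend to F_2; their values give Z and T,
   their brackets with d/dalpha give dZ/dalpha and dT/dalpha, and Z, dZ/dalpha, T, dT/dalpha,
   d/dalpha form a basis of the tangent space.  Smoothness of these fields follows by writing
   their components as trigonometric polynomials in the coordinates, differentiated
   symbolically. *)

Section TrigTerms.
Variable R : realType.

Inductive term :=
  | TCst of R | TCoord of 'I_5 | TSin of 'I_5 | TCos of 'I_5
  | TAdd of term & term | TMul of term & term.

Fixpoint teval (t : term) (q : 'rV[R]_5) : R :=
  match t with
  | TCst c => c
  | TCoord i => q ord0 i
  | TSin i => sin (q ord0 i)
  | TCos i => cos (q ord0 i)
  | TAdd a b => teval a q + teval b q
  | TMul a b => teval a q * teval b q
  end.

Fixpoint tderive (v : 'rV[R]_5) (t : term) : term :=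
  match t with
  | TCst _ => TCst 0
  | TCoord i => TCst (v ord0 i)
  | TSin i => TMul (TCos i) (TCst (v ord0 i))
  | TCos i => TMul (TCst (- v ord0 i)) (TSin i)
  | TAdd a b => TAdd (tderive v a) (tderive v b)
  | TMul a b => TAdd (TMul (tderive v a) b) (TMul a (tderive v b))
  end.

Lemma diff_coordE (i : 'I_5) (q v : 'rV[R]_5) :
  'd (fun N : 'rV[R]_5 => N ord0 i) q v = v ord0 i.
Proof.
rewrite -deriveE; last exact: differentiable_coord.
have dq : derivable id q v by apply/diff_derivable.
by move/matrixP: (derive_mx dq) => /(_ ord0 i); rewrite derive_id mxE => ->.
Qed.

Lemma teval_differentiable t q : differentiable (teval t) q.
Proof.
elim: t => [c|i|i|i|a da b db|a da b db] /=.
- exact: differentiable_cst.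
- exact: differentiable_coord.
- apply: (differentiable_comp (differentiable_coord _ _ _)).
  exact/derivable1_diffP/derivable_sin.
- apply: (differentiable_comp (differentiable_coord _ _ _)).
  exact/derivable1_diffP/derivable_cos.
- exact: (differentiableD da db).
- exact: (differentiableM da db).
Qed.

Lemma diff_comp_coord (f : R -> R) (df : R) (i : 'I_5) (q v : 'rV[R]_5) :
  is_derive (q ord0 i) 1 f df ->
  'd (fun N : 'rV[R]_5 => f (N ord0 i)) q v = df * v ord0 i.
Proof.
move=> fq; have df_q : differentiable f (q ord0 i) by apply/derivable1_diffP.
rewrite (@diff_comp _ _ _ _ (fun N : 'rV[R]_5 => N ord0 i) f) //=.
- rewrite diff1E // derive1E derive_val.
  transitivity ('d (fun N : 'rV[R]_5 => N ord0 i) q v * df) => //.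
  by rewrite diff_coordE mulrC.
- exact: differentiable_coord.
Qed.

Lemma diff_teval t q v : 'd (teval t) q v = teval (tderive v t) q.
Proof.
elim: t => [c|i|i|i|a ea b eb|a ea b eb].
- by rewrite diff_cst.
- exact: diff_coordE.
- by rewrite /= (diff_comp_coord v (is_derive_sin _)) mulrC.
- by rewrite /= (diff_comp_coord v (is_derive_cos _)) !mulNr mulrC.
- rewrite -[teval (TAdd a b)]/(teval a + teval b).
  rewrite (diffD (teval_differentiable a q) (teval_differentiable b q)) /=.
  by congr (_ + _); [exact: ea | exact: eb].
- rewrite -[teval (TMul a b)]/(teval a * teval b).
  rewrite (diffM (teval_differentiable a q) (teval_differentiable b q)) /= addrC.
  transitivity (teval b q * 'd (teval a) q v + teval a q * 'd (teval b) q v) => //.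
  by rewrite ea eb mulrC.
Qed.

Lemma derive_teval t q v : 'D_v (teval t) q = teval (tderive v t) q.
Proof. by rewrite deriveE ?diff_teval //; exact: teval_differentiable. Qed.

Definition tfield n (E : 'I_n -> term) (q : 'rV[R]_5) : 'rV[R]_n :=
  \row_(j < n) teval (E j) q.

Lemma tfield_differentiable n (E : 'I_n -> term) q : differentiable (tfield E) q.
Proof.
have -> : tfield E = \sum_(j < n) (fun q => teval (E j) q *: delta_mx 0 j).
  apply/funext => q'; rewrite fct_sumE; apply/rowP => k.
  rewrite !mxE summxE (bigD1 k) //= big1 => [|j /negbTE jk]; rewrite !mxE.
    by rewrite !eqxx mulr1 addr0.
  by rewrite eq_sym jk andbF mulr0.
apply: differentiable_sum => j; apply: differentiableZl.
exact: teval_differentiable.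
Qed.

Lemma derive_tfield n (E : 'I_n -> term) q v :
  'D_v (tfield E) q = tfield (fun j => tderive v (E j)) q.
Proof.
rewrite derive_mx; last exact/diff_derivable/tfield_differentiable.
apply/rowP => k; rewrite !mxE -derive_teval.
by congr ('D_v _ q); apply/funext => q'; rewrite mxE.
Qed.

Lemma iterD_tfield (vs : seq 'rV[R]_5) (E : 'I_5 -> term) :
  Defs.iterD vs (tfield E) = tfield (fun j => foldr tderive (E j) vs).
Proof. by elim: vs => //= v vs IH; apply/funext => q; rewrite IH derive_tfield. Qed.

Lemma tfield_smooth (U : set 'rV[R]_5) (E : 'I_5 -> term) : smooth_on U (tfield E).
Proof. by move=> vs p _; rewrite iterD_tfield; exact: tfield_differentiable. Qed.

End TrigTerms.

Arguments TCoord {R}.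
Arguments TSin {R}.
Arguments TCos {R}.

Definition ord_cat (T : Type) m n (f : 'I_m -> T) (g : 'I_n -> T) (i : 'I_(m + n)) : T :=
  match fintype.split i with inl j => f j | inr j => g j end.

Lemma ord_cat_lshift (T : Type) m n (f : 'I_m -> T) (g : 'I_n -> T) i :
  ord_cat f g (lshift n i) = f i.
Proof. by rewrite /ord_cat (unsplitK (inl _ i)). Qed.

Lemma ord_cat_rshift (T : Type) m n (f : 'I_m -> T) (g : 'I_n -> T) i :
  ord_cat f g (rshift m i) = g i.
Proof. by rewrite /ord_cat (unsplitK (inr _ i)). Qed.

Section BracketSpan.
Variable R : realType.
Implicit Types (p w : 'rV[R]_5).

Definition bracket_span p w : Prop :=
  exists (n : nat) (c : 'I_n -> R) (b : 'I_n -> bool)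
         (X Y : 'I_n -> 'rV[R]_5 -> 'rV[R]_5),
    (forall i, tangent_to_D (X i) /\ tangent_to_D (Y i)) /\
    w = \sum_(i < n) c i *: (if b i then X i p else lie (X i) (Y i) p).

Lemma bracket_span_field p X : tangent_to_D X -> bracket_span p (X p).
Proof.
move=> tX; exists 1%N, (fun=> 1), (fun=> true), (fun=> X), (fun=> X).
by split => //; rewrite big_ord1 scale1r.
Qed.

Lemma bracket_span_lie p X Y :
  tangent_to_D X -> tangent_to_D Y -> bracket_span p (lie X Y p).
Proof.
move=> tX tY; exists 1%N, (fun=> 1), (fun=> false), (fun=> X), (fun=> Y).
by split => //; rewrite big_ord1 scale1r.
Qed.

Lemma bracket_spanZ p k w : bracket_span p w -> bracket_span p (k *: w).
Proof.
move=> [n [c [b [X [Y [tXY ->]]]]]].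
exists n, (fun i => k * c i), b, X, Y; split => //.
by rewrite scaler_sumr; apply: eq_bigr => i _; rewrite scalerA.
Qed.

Lemma bracket_spanD p w1 w2 :
  bracket_span p w1 -> bracket_span p w2 -> bracket_span p (w1 + w2).
Proof.
move=> [n1 [c1 [b1 [X1 [Y1 [tXY1 ->]]]]]] [n2 [c2 [b2 [X2 [Y2 [tXY2 ->]]]]]].
exists (n1 + n2)%N, (ord_cat c1 c2), (ord_cat b1 b2), (ord_cat X1 X2), (ord_cat Y1 Y2).
split; first by move=> i; rewrite /ord_cat; case: fintype.split.
by rewrite big_split_ord /=; congr (_ + _); apply: eq_bigr => i _;
  rewrite ?ord_cat_lshift ?ord_cat_rshift.
Qed.

End BracketSpan.

Lemma derive_dirB (R : realType) (V W : normedModType R) (f : V -> W) x (u v : V) :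
  differentiable f x -> 'D_(u - v) f x = 'D_u f x - 'D_v f x.
Proof. by move=> df; rewrite !deriveE // linearB. Qed.

Section PlaneVectors.
Variable R : realType.

Lemma parallel_scalel (k : R) (u : 'rV[R]_2) : parallel (k *: u) u.
Proof. by rewrite /parallel /cross2 !mxE; ring. Qed.

Lemma vec2E (a : 'rV[R]_2) : a = vec2 (a ord0 i0) (a ord0 i1).
Proof.
apply/rowP => -[[|[|//]] lt_j2]; rewrite mxE /=; congr (a _ _); exact: val_inj.
Qed.

Lemma parallel_unitP (a : 'rV[R]_2) (t : R) :
  parallel a (vec2 (cos t) (sin t)) -> exists k, a = k *: vec2 (cos t) (sin t).
Proof.
rewrite /parallel /cross2 [a]vec2E !mxE /= => perp0.
exists (a ord0 i0 * cos t + a ord0 i1 * sin t); apply/rowP => j; rewrite !mxE.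
case: ifP => _; apply/subr0_eq.
- by rewrite -(mulr0 (sin t)) -perp0; ring: (cos2sin2 t).
- by rewrite -(mulr0 (- cos t)) -perp0; ring: (cos2sin2 t).
Qed.

Lemma unit_vec2_neq0 (t : R) : vec2 (cos t) (sin t) != 0.
Proof.
apply/eqP => /rowP vt0; have := cos2Dsin2 t.
move: (vt0 i0) (vt0 i1); rewrite !mxE /= => -> ->.
by rewrite expr0n addr0 => /esym/eqP; rewrite oner_eq0.
Qed.

Lemma scale_unit_vec2_eq0 (k t : R) :
  k *: vec2 (cos t) (sin t) = 0 -> k = 0.
Proof. by move/eqP; rewrite scaler_eq0 (negbTE (unit_vec2_neq0 t)) orbF => /eqP. Qed.

End PlaneVectors.

Section FramedTwoGons.
Variable R : realType.
Implicit Types (p q v w : 'rV[R]_5) (a b c k : R).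

Local Notation x q := (q ord0 i_x).
Local Notation y q := (q ord0 i_y).
Local Notation phi q := (q ord0 i_phi).
Local Notation r q := (q ord0 i_r).
Local Notation alpha q := (q ord0 i_alpha).

Definition vec5 (a1 a2 a3 a4 a5 : R) : 'rV[R]_5 :=
  \row_(j < 5) nth 0 [:: a1; a2; a3; a4; a5] j.

Definition zvec p : 'rV[R]_5 :=
  vec5 (- sin (phi p) * sin (alpha p)) (cos (phi p) * sin (alpha p)) 0 (cos (alpha p)) 0.
Definition tvec p : 'rV[R]_5 :=
  vec5 (r p * cos (phi p) * cos (alpha p)) (r p * sin (phi p) * cos (alpha p))
       (sin (alpha p)) 0 0.
Local Notation evec := (unitvec R i_alpha).

Lemma B1_tfield : @B1 R = tfield (fun j : 'I_2 => if val j == 0%N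
  then TAdd (TCoord i_x) (TMul (TCst (-1)) (TMul (TCoord i_r) (TCos i_phi)))
  else TAdd (TCoord i_y) (TMul (TCst (-1)) (TMul (TCoord i_r) (TSin i_phi)))).
Proof.
apply/funext => q; apply/rowP => j; rewrite !mxE /Defs.coord.
by case: ifP => _ /=; ring.
Qed.

Lemma B2_tfield : @B2 R = tfield (fun j : 'I_2 => if val j == 0%N
  then TAdd (TCoord i_x) (TMul (TCoord i_r) (TCos i_phi))
  else TAdd (TCoord i_y) (TMul (TCoord i_r) (TSin i_phi))).
Proof. by apply/funext => q; apply/rowP => j; rewrite !mxE; case: ifP. Qed.

Lemma derive_B1 p v : 'D_v (@B1 R) p =
  vec2 (x v - r v * cos (phi p) + r p * sin (phi p) * phi v)
       (y v - r v * sin (phi p) - r p * cos (phi p) * phi v).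
Proof.
rewrite B1_tfield derive_tfield; apply/rowP => j; rewrite !mxE.
by case: ifP => _ /=; ring.
Qed.

Lemma derive_B2 p v : 'D_v (@B2 R) p =
  vec2 (x v + r v * cos (phi p) - r p * sin (phi p) * phi v)
       (y v + r v * sin (phi p) + r p * cos (phi p) * phi v).
Proof.
rewrite B2_tfield derive_tfield; apply/rowP => j; rewrite !mxE.
by case: ifP => _ /=; ring.
Qed.

Lemma derive_B1_frame p a b c :
  'D_(a *: zvec p + b *: tvec p + c *: evec) (@B1 R) p = (r p * b - a) *: u1 p.
Proof.
rewrite derive_B1; apply/rowP => j; rewrite !mxE /= cosB sinB.
by case: ifP => _; ring.
Qed.

Lemma derive_B2_frame p a b c :
  'D_(a *: zvec p + b *: tvec p + c *: evec) (@B2 R) p = (r p * b + a) *: u2 p.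
Proof.
rewrite derive_B2; apply/rowP => j; rewrite !mxE /= cosD sinD.
by case: ifP => _; ring.
Qed.

Lemma Dist_frame p a b c : Dist p (a *: zvec p + b *: tvec p + c *: evec).
Proof.
by split; [rewrite derive_B1_frame | rewrite derive_B2_frame]; exact: parallel_scalel.
Qed.

Definition frame_mx p : 'M[R]_(3, 5) := \matrix_(i < 3) nth 0 [:: zvec p; tvec p; evec] i.

Lemma mul_frame_mx p (e : 'rV[R]_3) :
  e *m frame_mx p = e 0 0 *: zvec p + e 0 1 *: tvec p + e 0 2%:R *: evec.
Proof.
rewrite mulmx_sum_row !big_ord_recr big_ord0 !rowK /= add0r.
by congr (_ *: _ + _ *: _ + _ *: _); congr (e _ _); apply: val_inj.
Qed.

Lemma vec5E v : v = vec5 (x v) (y v) (phi v) (r v) (alpha v).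
Proof.
apply/rowP => -[[|[|[|[|[|//]]]]] lt_j5]; rewrite mxE /=; congr (v _ _); exact: val_inj.
Qed.

Lemma B1_differentiable p : differentiable (@B1 R) p.
Proof. by rewrite B1_tfield; exact: tfield_differentiable. Qed.

Lemma B2_differentiable p : differentiable (@B2 R) p.
Proof. by rewrite B2_tfield; exact: tfield_differentiable. Qed.

Lemma velocities_inj p v : r p != 0 ->
  'D_v (@B1 R) p = 0 -> 'D_v (@B2 R) p = 0 -> alpha v = 0 -> v = 0.
Proof.
rewrite derive_B1 derive_B2 => r_neq0 /rowP B1v /rowP B2v alpha_v0.
move: (B1v i0) (B1v i1) (B2v i0) (B2v i1); rewrite !mxE /= => e1x e1y e2x e2y.
have x_v0 : x v = 0 by lra.
have y_v0 : y v = 0 by lra.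
have e_cos : r v * cos (phi p) = r p * sin (phi p) * phi v by lra.
have e_sin : r v * sin (phi p) = - (r p * cos (phi p) * phi v) by lra.
have r_v0 : r v = 0.
  have -> : r v = cos (phi p) * (r v * cos (phi p)) + sin (phi p) * (r v * sin (phi p)).
    by ring: (cos2sin2 (phi p)).
  by rewrite e_cos e_sin; ring.
have phi_v0 : phi v = 0.
  suff /eqP : r p * phi v = 0 by rewrite mulf_eq0 (negbTE r_neq0) => /eqP.
  have -> : r p * phi v = sin (phi p) * (r p * sin (phi p) * phi v)
                          + cos (phi p) * (r p * cos (phi p) * phi v).
    by ring: (cos2sin2 (phi p)).
  have -> : r p * cos (phi p) * phi v = - (r v * sin (phi p)) by lra.
  by rewrite -e_cos r_v0; ring.
rewrite [v]vec5E x_v0 y_v0 phi_v0 r_v0 alpha_v0; apply/rowP => j.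
by rewrite !mxE (_ : [:: 0; 0; 0; 0; 0] = nseq 5 0) // nth_nseq if_same.
Qed.

Lemma Dist_decomp p v : r p != 0 -> Dist p v ->
  exists a b, v = a *: zvec p + b *: tvec p + alpha v *: evec.
Proof.
move=> r_neq0 [/parallel_unitP [k1 B1v] /parallel_unitP [k2 B2v]].
exists ((k2 - k1) / 2), ((k1 + k2) / (2 * r p)).
apply/eqP; rewrite -subr_eq0; apply/eqP.
apply: (velocities_inj r_neq0).
- rewrite derive_dirB; last exact: B1_differentiable.
  have -> := derive_B1_frame p ((k2 - k1) / 2) ((k1 + k2) / (2 * r p)) (alpha v).
  rewrite (_ : r p * _ - _ = k1); last by field.
  by apply/eqP; rewrite subr_eq0 B1v.
- rewrite derive_dirB; last exact: B2_differentiable.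
  have -> := derive_B2_frame p ((k2 - k1) / 2) ((k1 + k2) / (2 * r p)) (alpha v).
  rewrite (_ : r p * _ + _ = k2); last by field.
  by apply/eqP; rewrite subr_eq0 B2v.
- by rewrite !mxE /=; ring.
Qed.

Lemma Dist_rank3 p : r p != 0 ->
  row_free (frame_mx p) /\ (forall v, Dist p v <-> (v <= frame_mx p)%MS).
Proof.
move=> r_neq0; split.
  apply/inj_row_free => e; rewrite mul_frame_mx => e_frame0.
  have := derive_B1_frame p (e 0 0) (e 0 1) (e 0 2%:R).
  have := derive_B2_frame p (e 0 0) (e 0 1) (e 0 2%:R).
  rewrite e_frame0 !derive0 => /esym/scale_unit_vec2_eq0 k2 /esym/scale_unit_vec2_eq0 k1.
  have e00 : e 0 0 = 0 by lra.
  have e01 : e 0 1 = 0.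
    suff /eqP : r p * e 0 1 = 0 by rewrite mulf_eq0 (negbTE r_neq0) => /eqP.
    lra.
  have e02 : e 0 2%:R = 0.
    by move/rowP: e_frame0 => /(_ i_alpha); rewrite !mxE /= e00 e01; lra.
  apply/rowP => -[[|[|[|//]]] lt_i3]; rewrite mxE;
    [rewrite -[RHS]e00 | rewrite -[RHS]e01 | rewrite -[RHS]e02];
    by congr (e _ _); apply: val_inj.
move=> v; split => [Dv | /submxP [e ->]]; last by rewrite mul_frame_mx; exact: Dist_frame.
have [a [b v_eq]] := Dist_decomp r_neq0 Dv.
apply/submxP; exists (\row_(i < 3) nth 0 [:: a; b; alpha v] i).
by rewrite mul_frame_mx !mxE -v_eq.
Qed.

Definition zvec_alpha p : 'rV[R]_5 :=
  vec5 (- sin (phi p) * cos (alpha p)) (cos (phi p) * cos (alpha p)) 0 (- sin (alpha p)) 0.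
Definition tvec_alpha p : 'rV[R]_5 :=
  vec5 (- r p * cos (phi p) * sin (alpha p)) (- r p * sin (phi p) * sin (alpha p))
       (cos (alpha p)) 0 0.

Definition alpha_field (q : 'rV[R]_5) : 'rV[R]_5 := evec.
Definition modulated (f : R -> R) (V : 'rV[R]_5 -> 'rV[R]_5) q := f (alpha q) *: V q.

Definition zvec_terms (j : 'I_5) : term R :=
  nth (TCst 0) [:: TMul (TMul (TCst (-1)) (TSin i_phi)) (TSin i_alpha);
                   TMul (TCos i_phi) (TSin i_alpha); TCst 0; TCos i_alpha; TCst 0] j.
Definition tvec_terms (j : 'I_5) : term R :=
  nth (TCst 0) [:: TMul (TMul (TCoord i_r) (TCos i_phi)) (TCos i_alpha);
                   TMul (TMul (TCoord i_r) (TSin i_phi)) (TCos i_alpha);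
                   TSin i_alpha; TCst 0; TCst 0] j.

Lemma zvec_tfield : zvec = tfield zvec_terms.
Proof.
apply/funext => q; apply/rowP => -[[|[|[|[|[|//]]]]] ?]; rewrite !mxE /=; ring.
Qed.

Lemma tvec_tfield : tvec = tfield tvec_terms.
Proof.
apply/funext => q; apply/rowP => -[[|[|[|[|[|//]]]]] ?]; rewrite !mxE /=; ring.
Qed.

Lemma modulated_tfield f t E : (forall q, f (alpha q) = teval t q) ->
  modulated f (tfield E) = tfield (fun j => TMul t (E j)).
Proof. by move=> ft; apply/funext => q; apply/rowP => j; rewrite !mxE /= ft. Qed.

Definition phi_periodic (V : 'rV[R]_5 -> 'rV[R]_5) :=
  forall q, V (q + (2 * pi) *: unitvec R i_phi) = V q.
Definition alpha_alternating (V : 'rV[R]_5 -> 'rV[R]_5) :=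
  forall q, V (q + pi *: unitvec R i_alpha) = - V q.

Lemma shift_coordE q c (i j : 'I_5) :
  (q + c *: unitvec R i) ord0 j = q ord0 j + (if j == i then c else 0).
Proof. by rewrite !mxE; case: (j == i) => /=; rewrite ?mulr1n ?mulr0n ?mulr1 ?mulr0. Qed.

Lemma zvec_phi_periodic : phi_periodic zvec.
Proof.
by move=> q; rewrite /zvec !shift_coordE /= !addr0 mulr_natl sinD2pi cosD2pi.
Qed.

Lemma tvec_phi_periodic : phi_periodic tvec.
Proof.
by move=> q; rewrite /tvec !shift_coordE /= !addr0 mulr_natl sinD2pi cosD2pi.
Qed.

Lemma zvec_alpha_alternating : alpha_alternating zvec.
Proof.
move=> q; rewrite /zvec !shift_coordE /= !addr0 sinDpi cosDpi.
by apply/rowP => j; rewrite !mxE; case: j => -[|[|[|[|[|]]]]] //= _; ring.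
Qed.

Lemma tvec_alpha_alternating : alpha_alternating tvec.
Proof.
move=> q; rewrite /tvec !shift_coordE /= !addr0 sinDpi cosDpi.
by apply/rowP => j; rewrite !mxE; case: j => -[|[|[|[|[|]]]]] //= _; ring.
Qed.

Lemma modulated_descends f V :
  alternating f pi -> phi_periodic V -> alpha_alternating V -> descends (modulated f V).
Proof.
move=> f_alt V_per V_alt q; rewrite /modulated V_per V_alt !shift_coordE /= !addr0.
by rewrite f_alt scaleNr scalerN opprK.
Qed.

Lemma Dist_zvec p : Dist p (zvec p).
Proof. by have := Dist_frame p 1 0 0; rewrite scale1r !scale0r !addr0. Qed.

Lemma Dist_tvec p : Dist p (tvec p).
Proof. by have := Dist_frame p 0 1 0; rewrite scale1r !scale0r add0r addr0. Qed.

Lemma DistZ p k v : r p != 0 -> Dist p v -> Dist p (k *: v).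
Proof. by move=> /Dist_rank3 [_ DE] /DE Dv; apply/DE; exact: scalemx_sub. Qed.

Lemma modulated_tangent f t V E :
  (forall q, f (alpha q) = teval t q) -> V = tfield E -> alternating f pi ->
  phi_periodic V -> alpha_alternating V -> (forall p, Dist p (V p)) ->
  tangent_to_D (modulated f V).
Proof.
move=> ft VE f_alt V_per V_alt DV; split.
- by rewrite VE (modulated_tfield _ ft); exact: tfield_smooth.
- exact: modulated_descends.
- by move=> p p_dom; apply: DistZ; [exact: lt0r_neq0 | exact: DV].
Qed.

Lemma alpha_field_tangent : tangent_to_D alpha_field.
Proof.
split => //.
- rewrite (_ : alpha_field = tfield (fun j => TCst (evec ord0 j))).
    exact: tfield_smooth.
  by apply/funext => q; apply/rowP => j; rewrite !mxE.
- by move=> p _; have := Dist_frame p 0 0 1; rewrite scale1r !scale0r !add0r.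
Qed.

Lemma modulated_zvec_tangent (f : R -> R) (t : term R) :
  (forall q, f (alpha q) = teval t q) -> alternating f pi -> tangent_to_D (modulated f zvec).
Proof.
move=> ft f_alt; apply: (modulated_tangent ft zvec_tfield) => //.
- exact: zvec_phi_periodic.
- exact: zvec_alpha_alternating.
- exact: Dist_zvec.
Qed.

Lemma modulated_tvec_tangent (f : R -> R) (t : term R) :
  (forall q, f (alpha q) = teval t q) -> alternating f pi -> tangent_to_D (modulated f tvec).
Proof.
move=> ft f_alt; apply: (modulated_tangent ft tvec_tfield) => //.
- exact: tvec_phi_periodic.
- exact: tvec_alpha_alternating.
- exact: Dist_tvec.
Qed.

Lemma lie_alpha_field X p : lie alpha_field X p = 'D_evec X p.
Proof. by rewrite /lie derive_cst subr0. Qed.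

Lemma cos_zvec_tangent : tangent_to_D (modulated cos zvec).
Proof. by apply: (modulated_zvec_tangent (t := TCos i_alpha)) => //; exact: cosDpi. Qed.

Lemma sin_zvec_tangent : tangent_to_D (modulated sin zvec).
Proof. by apply: (modulated_zvec_tangent (t := TSin i_alpha)) => //; exact: sinDpi. Qed.

Lemma cos_tvec_tangent : tangent_to_D (modulated cos tvec).
Proof. by apply: (modulated_tvec_tangent (t := TCos i_alpha)) => //; exact: cosDpi. Qed.

Lemma sin_tvec_tangent : tangent_to_D (modulated sin tvec).
Proof. by apply: (modulated_tvec_tangent (t := TSin i_alpha)) => //; exact: sinDpi. Qed.

Lemma bracket_span_zvec p : bracket_span p (zvec p).
Proof.
have -> : zvec p = cos (alpha p) *: modulated cos zvec p + sin (alpha p) *: modulated sin zvec p.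
  by rewrite /modulated !scalerA -scalerDl -!expr2 cos2Dsin2 scale1r.
by apply: bracket_spanD; apply/bracket_spanZ/bracket_span_field;
  [exact: cos_zvec_tangent | exact: sin_zvec_tangent].
Qed.

Lemma bracket_span_tvec p : bracket_span p (tvec p).
Proof.
have -> : tvec p = cos (alpha p) *: modulated cos tvec p + sin (alpha p) *: modulated sin tvec p.
  by rewrite /modulated !scalerA -scalerDl -!expr2 cos2Dsin2 scale1r.
by apply: bracket_spanD; apply/bracket_spanZ/bracket_span_field;
  [exact: cos_tvec_tangent | exact: sin_tvec_tangent].
Qed.

Lemma bracket_span_zvec_alpha p : bracket_span p (zvec_alpha p).
Proof.
have -> : zvec_alpha p = cos (alpha p) *: lie alpha_field (modulated cos zvec) p
                         + sin (alpha p) *: lie alpha_field (modulated sin zvec) p.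
  rewrite !lie_alpha_field zvec_tfield.
  rewrite (modulated_tfield (t := TCos i_alpha)) // (modulated_tfield (t := TSin i_alpha)) //.
  rewrite !derive_tfield; apply/rowP => -[[|[|[|[|[|//]]]]] ?]; rewrite !mxE /= !mxE /=;
    ring: (cos2sin2 (alpha p)).
by apply: bracket_spanD; apply/bracket_spanZ/bracket_span_lie;
  [exact: alpha_field_tangent | exact: cos_zvec_tangent
  |exact: alpha_field_tangent | exact: sin_zvec_tangent].
Qed.

Lemma bracket_span_tvec_alpha p : bracket_span p (tvec_alpha p).
Proof.
have -> : tvec_alpha p = cos (alpha p) *: lie alpha_field (modulated cos tvec) p
                         + sin (alpha p) *: lie alpha_field (modulated sin tvec) p.
  rewrite !lie_alpha_field tvec_tfield.
  rewrite (modulated_tfield (t := TCos i_alpha)) // (modulated_tfield (t := TSin i_alpha)) //.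
  rewrite !derive_tfield; apply/rowP => -[[|[|[|[|[|//]]]]] ?]; rewrite !mxE /= !mxE /=;
    ring: (cos2sin2 (alpha p)).
by apply: bracket_spanD; apply/bracket_spanZ/bracket_span_lie;
  [exact: alpha_field_tangent | exact: cos_tvec_tangent
  |exact: alpha_field_tangent | exact: sin_tvec_tangent].
Qed.

(* [n_w] and [m_w] are the components of the planar part of [w] normal and along the segment;
   [zvec p], [zvec_alpha p] are the rotation by alpha of (n, d/dr) and [tvec p], [tvec_alpha p]
   that of (r m, d/dphi), where m = (cos phi, sin phi) and n = (- sin phi, cos phi). *)
Lemma frame_coords p w : r p != 0 ->
  let n_w := cos (phi p) * y w - sin (phi p) * x w in
  let m_w := cos (phi p) * x w + sin (phi p) * y w in
  w = (n_w * sin (alpha p) + r w * cos (alpha p)) *: zvec p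
      + (n_w * cos (alpha p) - r w * sin (alpha p)) *: zvec_alpha p
      + (m_w * cos (alpha p) / r p + phi w * sin (alpha p)) *: tvec p
      + (phi w * cos (alpha p) - m_w * sin (alpha p) / r p) *: tvec_alpha p
      + alpha w *: evec.
Proof.
move=> r_neq0 n_w m_w; rewrite {1}[w]vec5E /n_w /m_w.
apply/rowP => -[[|[|[|[|[|//]]]]] ?]; rewrite !mxE /=;
  by field: (cos2sin2 (phi p)) (cos2sin2 (alpha p)).
Qed.

Lemma bracket_generating p w : r p != 0 -> bracket_span p w.
Proof.
move=> r_neq0; have /= -> := frame_coords w r_neq0.
by repeat apply: bracket_spanD; apply: bracket_spanZ;
  [exact: bracket_span_zvec | exact: bracket_span_zvec_alpha | exact: bracket_span_tvec
  | exact: bracket_span_tvec_alpha | exact: (bracket_span_field p alpha_field_tangent)].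
Qed.

End FramedTwoGons.

Theorem theorem5p1 (R : realType) :
  (forall p : 'rV[R]_5, F2dom p ->
     exists B : 'M[R]_(3, 5),
       row_free B /\ (forall v : 'rV[R]_5, Dist p v <-> (v <= B)%MS))
  /\
  (forall p : 'rV[R]_5, F2dom p ->
     forall w : 'rV[R]_5,
       exists (n : nat) (c : 'I_n -> R) (b : 'I_n -> bool)
              (X Y : 'I_n -> 'rV[R]_5 -> 'rV[R]_5),
         (forall i, tangent_to_D (X i) /\ tangent_to_D (Y i)) /\
         w = \sum_(i < n) c i *: (if b i then X i p else lie (X i) (Y i) p)).
Proof.
split=> p /lt0r_neq0 r_neq0; first by exists (frame_mx p); exact: Dist_rank3.
by move=> w; exact: bracket_generating.
Qed.
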